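(* Let $F$ be a nontrivial finite group, $\tfrac12<p<1$, and let $R_n=((L_n(i))_i,S_n)$ be the stationary random walk on $F\wr\mathbb{Z}$ with parameter $p$. Let $\rho_0=0$ and $\rho_k=\inf\{n>\rho_{k-1}:S_n=0\}$, and for $k\ge1$ let $M_k^+=\max_{0\le j\le\rho_k}S_j$ and $M_k^-=\min_{0\le j\le\rho_k}S_j$. Then for every $k\ge1$, \[\Pr(R_{\rho_k}=\mathrm{id}\mid S_0,S_1,\dots,S_{\rho_k})=|F|^{-(M_k^+-M_k^-+1)}.\]
   Context: Elements of $F\wr\mathbb{Z}$ are pairs $((L(i))_{i\in\mathbb{Z}},x)$ with $L:\mathbb{Z}\to F$ finitely supported and $x\in\mathbb{Z}$; $\mathrm{id}$ has all lamps $\mathrm{id}_F$ and $x=0$. $(S_n)$ is the Markov chain on $\mathbb{Z}$ with $S_0=0$ and $\Pr(S_{n+1}=x+1\mid S_n=x)$ equal to $p,\tfrac12,1-p$ for $x<0,x=0,x>0$ respectively, and $\Pr(S_{n+1}=x-1\mid S_n=x)$ equal to $1-p,\tfrac12,p$ respectively. $(U_n,V_n)_{n\ge1}$ are i.i.d. pairs of independent uniform elements of $F$, independent of $(S_n)$; $L_0\equiv\mathrm{id}_F$, $L_{n+1}(i)=L_n(i)$ for $i\notin\{S_n,S_{n+1}\}$, $L_{n+1}(S_n)=U_{n+1}$, $L_{n+1}(S_{n+1})=V_{n+1}$. The times $\rho_k$ are a.s. finite. *)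

(* (discrete probability written out as finite sums). *)
From HB Require Import structures.
From mathcomp Require Import all_boot all_order all_algebra all_fingroup.
From mathcomp Require Import boolp.
Set Implicit Arguments. Unset Strict Implicit. Unset Printing Implicit Defensive.
Import Order.TTheory GRing.Theory Num.Theory.
Local Open Scope ring_scope.

Definition stepP (R : realFieldType) (p : R) (x y : int) : R :=
  if y == x + 1 then (if x < 0 then p else if x == 0 then 2^-1 else 1 - p)
  else if y == x - 1 then (if x < 0 then 1 - p else if x == 0 then 2^-1 else p)
  else 0.

Definition pathprob (R : realFieldType) (p : R) (s : nat -> int) (m : nat) : R :=
  (s 0%N == 0)%:R * \prod_(i < m) stepP p (s i) (s i.+1).

(* Lamp configuration L_n driven by the path s and the lamp choices
   u n = (U_{n+1}, V_{n+1}). *)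
Fixpoint lamps (gT : finGroupType) (s : nat -> int) (u : nat -> gT * gT)
    (n : nat) : int -> gT :=
  match n with
  | 0%N => fun _ => 1%g
  | n'.+1 => fun i =>
      if i == s n'.+1 then (u n').2
      else if i == s n' then (u n').1
      else lamps s u n' i
  end.

Definition lampseq (gT : finGroupType) (m : nat) (t : m.-tuple (gT * gT))
  : nat -> gT * gT := fun n => nth (1%g, 1%g) t n.

Definition is_id (gT : finGroupType) (L : int -> gT) (x : int) : Prop :=
  (forall i, L i = 1%g) /\ x = 0.

(* Joint probability Pr(S_0..S_m = s, (U_j,V_j)_{1<=j<=m} = t): S independent of
   the i.i.d. uniform pairs (U_j, V_j) on F x F. *)
Definition jointprob (R : realFieldType) (gT : finGroupType) (p : R)
    (s : nat -> int) (m : nat) (t : m.-tuple (gT * gT)) : R :=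
  pathprob p s m * ((#|gT|%:R ^+ 2)^-1) ^+ m.

(* rho_k = m is determined by the path: m > 0, S_m = 0 and exactly k
   indices j in 1..m with S_j = 0. *)
Definition rho_eq (s : nat -> int) (k m : nat) : bool :=
  [&& (0 < m)%N, s m == 0 & count (fun j => s j == 0) (iota 1 m) == k].

(* Pr(R_{rho_k} = id | S_0, ..., S_{rho_k}) on the event
   {rho_k = m, (S_0..S_m) = s}: the ratio
   Pr(R_m = id, rho_k = m, S_{0..m} = s) / Pr(rho_k = m, S_{0..m} = s). *)
Definition condprob_id (R : realFieldType) (gT : finGroupType) (p : R)
    (s : nat -> int) (k m : nat) : R :=
  (\sum_(t : m.-tuple (gT * gT) | rho_eq s k m && `[< is_id (lamps s (lampseq t) m) (s m) >])
      jointprob p s t)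
  / (\sum_(t : m.-tuple (gT * gT) | rho_eq s k m) jointprob p s t).

Definition Mplus (s : nat -> int) (m : nat) : int := \big[Num.max/s 0%N]_(j < m.+1) s j.
Definition Mminus (s : nat -> int) (m : nat) : int := \big[Num.min/s 0%N]_(j < m.+1) s j.

From HB Require Import structures.
From mathcomp Require Import all_boot all_order all_algebra all_fingroup.
From mathcomp Require Import boolp zify ring.
Set Implicit Arguments. Unset Strict Implicit. Unset Printing Implicit Defensive.
Import Order.TTheory GRing.Theory Num.Theory.
Local Open Scope ring_scope.

(* Given the path, the lamp choices (U_j, V_j), 1 <= j <= m, are uniform on
   (F * F)^m, so the conditional probability is the proportion of choice
   tuples leaving every lamp trivial; neither p nor k plays a role.  Peeling
   off the last step, whose two writes are never overwritten, shows that this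
   proportion is |F|^-d, where d is the number of sites visited by the path;
   a nearest-neighbour path visits exactly the M^+ - M^- + 1 sites between
   its extremes. *)

Lemma sum_tuple_rcons (V : nmodType) (T : finType) m (F : m.+1.-tuple T -> V) :
  \sum_(t : m.+1.-tuple T) F t =
  \sum_(t : m.-tuple T) \sum_(x : T) F [tuple of rcons t x].
Proof.
rewrite pair_big /=.
pose unrcons (t : m.+1.-tuple T) :=
  ([tuple of belast (thead t) (behead t)], last (thead t) (behead t)).
have rcons_unrcons (t : m.+1.-tuple T) :
    rcons (belast (thead t) (behead t)) (last (thead t) (behead t)) = t.
  by rewrite -lastI; case/tupleP: t.
rewrite (reindex (fun tx : m.-tuple T * T => [tuple of rcons tx.1 tx.2])) //.
exists unrcons => [[t x] _|t _]; last by apply/val_inj; rewrite /= rcons_unrcons.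
have /rcons_inj[belastE lastE] := rcons_unrcons [tuple of rcons t x].
by rewrite /unrcons lastE; congr (_, _); apply/val_inj.
Qed.

Section Sites.

Variable s : nat -> int.

(* For n > 0, the number of distinct sites among s 0, ..., s n outside X. *)
Fixpoint sites_outside n (X : pred int) : nat :=
  if n is n'.+1 then
    (~~ X (s n) + ~~ (X (s n') || (s n' == s n)) +
     sites_outside n' (predU1 (s n') (predU1 (s n) X)))%N
  else 0%N.

Lemma eq_sites_outside n X Y : X =1 Y -> sites_outside n X = sites_outside n Y.
Proof.
elim: n X Y => [//|n IH] X Y XY /=.
rewrite !XY (IH _ (predU1 (s n) (predU1 (s n.+1) Y))) //.
by move=> i; rewrite !inE XY.
Qed.

Lemma sites_outsideS_predU1 n X :
  sites_outside n.+1 X = (~~ X (s n.+1) + sites_outside n.+1 (predU1 (s n.+1) X))%N.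
Proof.
rewrite /= eqxx add0n addnA; congr (_ + _ + _)%N.
  by rewrite orbC orbAC orbb.
by apply: eq_sites_outside => i; rewrite !inE; case: (i == s n.+1); rewrite ?orbT.
Qed.

End Sites.

Section Lamps.

Variables (gT : finGroupType) (s : nat -> int).

Definition trivial_off (X : pred int) (L : int -> gT) : bool :=
  `[< forall i, ~~ X i -> L i = 1%g >].

Lemma trivial_off_write2 X (L : int -> gT) x y a b :
  trivial_off X (fun i => if i == y then b else if i == x then a else L i) =
  [&& trivial_off (predU1 x (predU1 y X)) L,
      X x || (x == y) || (a == 1%g) & X y || (b == 1%g)].
Proof.
apply/asboolP/and3P => [L'_triv|[/asboolP L_triv xP yP] i Xi].
  split.
  - apply/asboolP => i; rewrite !inE !negb_or => /and3P[/negbTE ix /negbTE iy Xi].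
    by have := L'_triv i Xi; rewrite ix iy.
  - case: (X x) (L'_triv x) => //= /(_ isT).
    by case: (x =P y) => // _; rewrite eqxx => ->; rewrite eqxx.
  - by case: (X y) (L'_triv y) => //= /(_ isT); rewrite eqxx => ->.
case: (i =P y) => [iy|/eqP ny]; first by move: yP Xi; rewrite -iy => /orP[->|/eqP].
case: (i =P x) => [ix|/eqP nx].
  by move: xP Xi; rewrite -ix (negbTE ny) orbF => /orP[->|/eqP].
by apply: L_triv; rewrite !inE (negbTE nx) (negbTE ny).
Qed.

Lemma lamps_ext (u u' : nat -> gT * gT) m :
  (forall n, (n < m)%N -> u n = u' n) -> lamps s u m = lamps s u' m.
Proof.
elim: m => [//|m IH] uu' /=; rewrite uu' // IH // => n n_lt.
by apply: uu'; rewrite ltnW.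
Qed.

Lemma lamps_rcons m (t : m.-tuple (gT * gT)) a b :
  lamps s (lampseq [tuple of rcons t (a, b)]) m.+1 =
  fun i => if i == s m.+1 then b else if i == s m then a else lamps s (lampseq t) m i.
Proof.
rewrite /= /lampseq nth_rcons size_tuple ltnn eqxx (@lamps_ext _ (lampseq t)) //.
by move=> n n_lt; rewrite /lampseq nth_rcons size_tuple n_lt.
Qed.

Definition count_trivial_off m X : nat :=
  (\sum_(t : m.-tuple (gT * gT)) trivial_off X (lamps s (lampseq t) m))%N.

Lemma sum_orb_eq1 (c : bool) : (\sum_(a : gT) (c || (a == 1%g)) = #|gT| ^ c)%N.
Proof.
case: c; first by rewrite sum1_card.
by rewrite -big_mkcond /= sum1_card card1.
Qed.

Lemma count_trivial_offS m X :
  count_trivial_off m.+1 X =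
  (count_trivial_off m (predU1 (s m) (predU1 (s m.+1) X)) *
   #|gT| ^ (X (s m) || (s m == s m.+1)) * #|gT| ^ X (s m.+1))%N.
Proof.
rewrite /count_trivial_off sum_tuple_rcons !big_distrl; apply: eq_bigr => t _ /=.
transitivity (\sum_(a : gT) \sum_(b : gT)
  nat_of_bool (trivial_off X (lamps s (lampseq [tuple of rcons t (a, b)]) m.+1)))%N.
  by rewrite pair_bigA; apply: eq_bigr => -[].
rewrite -!sum_orb_eq1 -mulnA big_distrlr big_distrr; apply: eq_bigr => a _.
rewrite big_distrr; apply: eq_bigr => b _.
by rewrite lamps_rcons trivial_off_write2 -!mulnb.
Qed.

Lemma count_trivial_off0 X : count_trivial_off 0 X = 1%N.
Proof.
rewrite /count_trivial_off (eq_bigr (fun=> 1%N)) ?sum1_card ?card_tuple //.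
by move=> t _; rewrite /trivial_off asboolT.
Qed.

Lemma count_trivial_off_mul_exp m X :
  (count_trivial_off m X * #|gT| ^ sites_outside s m X = #|gT| ^ (2 * m))%N.
Proof.
elim: m X => [|m IH] X; first by rewrite count_trivial_off0.
rewrite count_trivial_offS /= mulnS [in RHS]expnD -(IH (predU1 (s m) (predU1 (s m.+1) X))).
move: (count_trivial_off _ _) (sites_outside _ _ _) => c d.
by case: (X (s m.+1)); case: (X (s m) || _); rewrite /= !expnD; ring.
Qed.

End Lamps.

Lemma big_ord_recr_AC (T : Type) (op : SemiGroup.com_law T) x n (F : nat -> T) :
  \big[op/x]_(i < n.+1) F i = op (\big[op/x]_(i < n) F i) (F n).
Proof.
rewrite -!(big_mkord xpredT) /index_iota !subn0 -addn1 iotaD cats1 big_rcons_op /=.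
elim: (iota 0 n) => [|i r IH]; first by rewrite !big_nil SemiGroup.opC.
by rewrite !big_cons IH SemiGroup.opA.
Qed.

Definition unit_steps (s : nat -> int) m :=
  forall j, (j < m)%N -> s j.+1 = s j + 1 \/ s j.+1 = s j - 1.

Lemma unit_steps_pathprob (R : realFieldType) (p : R) s m :
  pathprob p s m != 0 -> unit_steps s m.
Proof.
rewrite /pathprob mulf_eq0 negb_or => /andP[_ /prodf_neq0 steps_neq0] j j_lt.
move: (steps_neq0 (Ordinal j_lt) isT); rewrite /stepP /=.
case: (s j.+1 =P s j + 1) => [|_]; first by left.
by case: (s j.+1 =P s j - 1) => [|_]; [right | rewrite eqxx].
Qed.

Section Range.

Variable s : nat -> int.

Lemma Mplus0 : Mplus s 0 = s 0%N.
Proof. by rewrite /Mplus big_ord_recr_AC big_ord0 /= maxxx. Qed.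

Lemma Mminus0 : Mminus s 0 = s 0%N.
Proof. by rewrite /Mminus big_ord_recr_AC big_ord0 /= minxx. Qed.

Lemma MplusS n : Mplus s n.+1 = Num.max (Mplus s n) (s n.+1).
Proof. exact: big_ord_recr_AC. Qed.

Lemma MminusS n : Mminus s n.+1 = Num.min (Mminus s n) (s n.+1).
Proof. exact: big_ord_recr_AC. Qed.

Lemma Mminus_le_le_Mplus n : Mminus s n <= s n <= Mplus s n.
Proof.
by case: n => [|n]; rewrite ?Mplus0 ?Mminus0 ?MplusS ?MminusS; lia.
Qed.

Lemma sites_outside_interval n lo hi : unit_steps s n -> lo <= s n <= hi ->
  (sites_outside s n [pred i | lo <= i <= hi])%:Z =
  Num.max hi (Mplus s n) - hi + (lo - Num.min lo (Mminus s n)).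
Proof.
elim: n lo hi => [|n IH] lo hi steps sn_in /=; first by rewrite Mplus0 Mminus0; lia.
have step := steps n (ltnSn n).
rewrite (@eq_sites_outside _ _ _ [pred i | Num.min lo (s n) <= i <= Num.max hi (s n)]);
  last by move=> i; rewrite !inE; apply/idP/idP; lia.
rewrite !PoszD IH; first last.
- lia.
- by move=> j j_lt; apply: steps; apply: ltnW.
have := Mminus_le_le_Mplus n; rewrite MplusS MminusS; lia.
Qed.

Lemma sites_outside_pred0 m : (0 < m)%N -> unit_steps s m ->
  (sites_outside s m pred0)%:Z = Mplus s m - Mminus s m + 1.
Proof.
case: m => [//|m] _ steps; rewrite sites_outsideS_predU1 PoszD.
rewrite (@eq_sites_outside _ _ _ [pred i | s m.+1 <= i <= s m.+1]); last first.
  by move=> i; rewrite !inE -eq_le orbF.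
rewrite sites_outside_interval ?lexx //=.
have := Mminus_le_le_Mplus m.+1; lia.
Qed.

End Range.

Lemma condprob_id_count (R : realFieldType) (gT : finGroupType) (p : R) s k m :
  rho_eq s k m -> pathprob p s m != 0 ->
  condprob_id gT p s k m =
  (count_trivial_off gT s m pred0)%:R / (#|gT| ^ (2 * m))%:R.
Proof.
move=> rho pr_neq0; have /and3P[_ /eqP sm0 _] := rho.
rewrite /condprob_id /jointprob; set c := pathprob p s m * _.
have F_gt0 : (0 < #|gT|)%N by rewrite -cardsT cardG_gt0.
have c_neq0 : c != 0 by rewrite mulf_neq0 // !(expf_neq0, invr_eq0) // pnatr_eq0 -lt0n.
have -> : \sum_(t : m.-tuple (gT * gT) | rho_eq s k m) c = c * (#|gT| ^ (2 * m))%:R.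
  rewrite (eq_bigl xpredT) ?rho // sumr_const cardT -cardE card_tuple card_prod.
  by rewrite mulnn -expnM mulr_natr.
have -> : \sum_(t : m.-tuple (gT * gT) |
                 rho_eq s k m && `[< is_id (lamps s (lampseq t) m) (s m) >]) c =
          c * (count_trivial_off gT s m pred0)%:R.
  rewrite /count_trivial_off natr_sum mulr_sumr big_mkcond; apply: eq_bigr => t _.
  rewrite rho sm0 /trivial_off.
  case: asboolP => [[all_triv _]|not_id].
    by rewrite asboolT ?mulr1 // => i _; apply: all_triv.
  by rewrite asboolF ?mulr0 // => triv; apply: not_id; split=> // i; apply: triv.
by rewrite -mulf_div divff ?mul1r.
Qed.

Theorem proposition2p2 (R : realFieldType) (gT : finGroupType) (p : R)
  (hF : (1 < #|gT|)%N) (hp1 : 2^-1 < p) (hp2 : p < 1)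
  (k : nat) (hk : (0 < k)%N) (m : nat) (s : nat -> int)
  (hrho : rho_eq s k m) (hpos : 0 < pathprob p s m) :
  condprob_id gT p s k m = (#|gT|%:R : R) ^ (- (Mplus s m - Mminus s m + 1)).
Proof.
have pr_neq0 : pathprob p s m != 0 by rewrite gt_eqF.
have /and3P[m_gt0 _ _] := hrho.
have F_gt0 : (0 < #|gT|)%N by apply: ltnW.
rewrite condprob_id_count // -sites_outside_pred0 //; last exact: unit_steps_pathprob pr_neq0.
have count_exp := count_trivial_off_mul_exp gT s m pred0.
have count_gt0 : (0 < count_trivial_off gT s m pred0)%N.
  by move: (expn_gt0 #|gT| (2 * m)); rewrite F_gt0 -count_exp muln_gt0 => /andP[].
rewrite -exprnN -count_exp natrM natrX invfM mulrA divff ?mul1r //.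
by rewrite pnatr_eq0 -lt0n.
Qed.
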